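(* Let $m\ge 2$ and let $t,r_2$ be integers with $t\ge 0$ and $0\le r_2\le \lfloor\frac{m-1}{2}\rfloor-t$. Put $C_1=\mathrm{RM}(\lfloor\frac{m-1}{2}\rfloor-t,m)$ and $C_2=\mathrm{RM}(r_2,m)$ (so that $C_2\subseteq C_1$). Then $(C_1,C_2)$ is a binary CSS-$T$ pair if and only if $$\begin{cases} r_2\le 2t+1 & \text{if } m \text{ is even},\\ r_2\le 2t & \text{if } m \text{ is odd}.\end{cases}$$
   Context: $\mathrm{RM}(r,m)\subseteq\mathbb F_2^{2^m}$ is the binary Reed–Muller code of order $r$: the set of evaluation vectors, at all points of $\mathbb F_2^m$ in a fixed order, of polynomials in $\mathbb F_2[x_1,\dots,x_m]$ of degree at most $r$. The Hamming weight $\omega^{\mathrm H}(x)$ is the number of nonzero coordinates of $x$; $C^\perp$ is the dual with respect to the standard inner product. A pair of binary linear codes $(C_1,C_2)$ with $C_2\subseteq C_1\subseteq\mathbb F_2^n$ is a binary CSS-$T$ pair if (i) every $x\in C_2$ has even Hamming weight, and (ii) for every $x\in C_2$ there exists a linear code $C_x\subseteq C_1^\perp$ of dimension $\omega^{\mathrm H}(x)/2$ which is supported on $x$ (every $y\in C_x$ has $y_i=0$ whenever $x_i=0$) and is self-dual when regarded as a code of length $\omega^{\mathrm H}(x)$ on the support of $x$. *)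

From HB Require Import structures.
From mathcomp Require Import all_boot all_order all_algebra.
From mathcomp Require Import mpoly.
Set Implicit Arguments. Unset Strict Implicit. Unset Printing Implicit Defensive.
Import GRing.Theory.
Local Open Scope ring_scope.

Notation bvec n := 'rV['F_2]_n.

Definition wH n (x : bvec n) : nat := #|[set i | x 0 i != 0]|.

Definition dotv n (x y : bvec n) : 'F_2 := \sum_(i < n) x 0 i * y 0 i.

Definition supported_on n (y x : bvec n) : Prop := forall i, x 0 i = 0 -> y 0 i = 0.

(* The i-th point of F_2^m (fixed order: binary expansion of i, bit j = coordinate j). *)
Definition pt (m : nat) (i : 'I_(2 ^ m)) : 'I_m -> 'F_2 :=
  fun j => (odd (i %/ 2 ^ j))%:R.

Definition evalvec (m : nat) (p : {mpoly 'F_2[m]}) : bvec (2 ^ m) :=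
  \row_(i < 2 ^ m) p.@[pt i].

(* RM(r,m): evaluation vectors of polynomials of (total) degree at most r
   (msize p = 1 + degree, with msize 0 = 0). *)
Definition RM (r m : nat) : bvec (2 ^ m) -> Prop :=
  fun v => exists p : {mpoly 'F_2[m]}, (msize p <= r.+1)%N /\ v = evalvec p.

Arguments RM : clear implicits.

Definition CSS_T_pair n (C1 C2 : bvec n -> Prop) : Prop :=
  (forall x, C2 x -> C1 x) /\
  (forall x, C2 x -> ~~ odd (wH x)) /\
  (forall x, C2 x ->
     exists Cx : {vspace bvec n},
       [/\ \dim Cx = (wH x)./2,
           (forall y c, y \in Cx -> C1 c -> dotv y c = 0),
           (forall y, y \in Cx -> supported_on y x) &
           (* self-dual as a code on the support of x *)
           (forall z, supported_on z x ->
              (z \in Cx <-> forall y, y \in Cx -> dotv y z = 0))]).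

From HB Require Import structures.
From mathcomp Require Import all_boot all_order all_algebra.
From mathcomp Require Import mpoly.
From Stdlib Require Import Classical.
From mathcomp Require Import zify.
Set Implicit Arguments. Unset Strict Implicit. Unset Printing Implicit Defensive.
Import GRing.Theory.
Local Open Scope ring_scope.

(* A pair (C1, C2) is CSS-T exactly when the triple products
   sum_i x_i c_i c'_i vanish for x in C2 and c, c' in C1.  On the support of x
   this form becomes the standard inner product, so C1 restricts to a
   self-orthogonal code containing the all-one vector (the restriction of x);
   over F_2 such a code extends to a self-dual one, since v.v = v.1.
   Conversely, x * c lies in any self-dual witness for x.
   For Reed-Muller codes the triple product of the evaluations of p, q, q' is
   the sum of pqq' over F_2^m, which vanishes when deg(pqq') < m; if
   r2 + 2 r1 >= m, three monomials on disjoint blocks of variables multiply to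
   x_1...x_m, whose sum is 1.  The parity condition on m is r2 + 2 r1 < m. *)

Section DualCode.
Variable F : fieldType.

Definition dualmx k n (S : 'M[F]_(k, n)) : 'M_n := kermx S^T.

Lemma sub_dualmx n p k (A : 'M[F]_(p, n)) (B : 'M[F]_(k, n)) :
  (A <= dualmx B)%MS = (A *m B^T == 0).
Proof. exact: sub_kermx. Qed.

Lemma sub_dualmxC n p k (A : 'M[F]_(p, n)) (B : 'M[F]_(k, n)) :
  (A <= dualmx B)%MS = (B <= dualmx A)%MS.
Proof. by rewrite !sub_dualmx -trmx_eq0 trmx_mul !trmxK. Qed.

Lemma dualmxS n p k (A : 'M[F]_(p, n)) (B : 'M[F]_(k, n)) :
  (A <= B)%MS -> (dualmx B <= dualmx A)%MS.
Proof. by move=> sAB; rewrite sub_dualmxC (submx_trans sAB) // -sub_dualmxC. Qed.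

Lemma eqmx_dualmx n p k (A : 'M[F]_(p, n)) (B : 'M[F]_(k, n)) :
  (A :=: B)%MS -> (dualmx A :=: dualmx B)%MS.
Proof. by move=> eqAB; apply/eqmxP; rewrite !dualmxS ?eqAB. Qed.

Lemma sub_dualmx_adds n p k l (A : 'M[F]_(p, n)) (B : 'M[F]_(k, n)) (C : 'M[F]_(l, n)) :
  (A <= dualmx (B + C)%MS)%MS = (A <= dualmx B)%MS && (A <= dualmx C)%MS.
Proof. by rewrite sub_dualmxC addsmx_sub -!(sub_dualmxC A). Qed.

Lemma sub_dualmxMr n p k l (A : 'M[F]_(p, l)) (M : 'M[F]_(l, n)) (B : 'M[F]_(k, n)) :
  (A *m M <= dualmx B)%MS = (A <= dualmx (B *m M^T))%MS.
Proof. by rewrite !sub_dualmx trmx_mul trmxK mulmxA. Qed.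

Lemma mxrank_dualmx n k (S : 'M[F]_(k, n)) : \rank (dualmx S) = (n - \rank S)%N.
Proof. by rewrite mxrank_ker mxrank_tr. Qed.

Lemma mxrank_selfdual n k (S : 'M[F]_(k, n)) :
  (S == dualmx S)%MS -> (\rank S * 2)%N = n.
Proof.
move/eqmx_rank; rewrite mxrank_dualmx => rankS.
by have := rank_leq_col S; lia.
Qed.

End DualCode.

Lemma F2_01 (a : 'F_2) : a = 0 \/ a = 1.
Proof. by case: a => [[|[|k]] Hk]; [left | right | ]; try apply: val_inj. Qed.

Lemma mulF2_id (a : 'F_2) : a * a = a.
Proof. by case: (F2_01 a) => ->; rewrite ?mul0r ?mul1r. Qed.

Lemma sub_dualmx_self_F2 w (v : 'rV['F_2]_w) :
  (v <= dualmx v)%MS = (v <= dualmx (const_mx 1 : 'rV_w))%MS.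
Proof.
rewrite !sub_dualmx; congr (_ == 0); apply/matrixP => i j; rewrite !mxE.
by apply: eq_bigr => k _; rewrite !mxE !ord1 mulF2_id mulr1.
Qed.

Lemma selfdual_extension w (P : 'rV['F_2]_w -> Prop) k (S : 'M['F_2]_(k, w)) :
  ((const_mx 1 : 'rV_w) <= S)%MS -> (S <= dualmx S)%MS ->
  (forall c c', P c -> P c' -> (c <= dualmx c')%MS) ->
  (forall c, P c -> (c <= dualmx S)%MS) ->
  exists2 S' : 'M_w, (S' == dualmx S')%MS & forall c, P c -> (c <= S')%MS.
Proof.
move=> onesS + orthP; have [d] := ubnP (w - \rank S).
elim: d k S onesS => // d IH k S onesS rankS selforthS PS.
have [dualS_S | /row_subPn[i notS]] := boolP (dualmx S <= S)%MS.
  exists (dualmx S) => //; apply/eqmxP/eqmx_dualmx.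
  by apply/eqmxP; rewrite /eqmx selforthS.
have [v [vS notSv vP]] : exists v : 'rV_w, [/\ v <= dualmx S, ~~ (v <= S)
                                      & forall c, P c -> v <= dualmx c]%MS.
  have [[c Pc notSc] | PsubS] := classic (exists2 c, P c & ~~ (c <= S)%MS).
    by exists c; split=> [||c' Pc']; [apply: PS | | apply: orthP].
  exists (row i (dualmx S)); split=> [||c Pc]; [exact: row_sub | exact: notS |].
  have cS : (c <= S)%MS by apply/negPn/negP => notSc; apply: PsubS; exists c.
  exact: submx_trans (row_sub i _) (dualmxS cS).
have vv : (v <= dualmx v)%MS.
  by rewrite sub_dualmx_self_F2 (submx_trans vS) ?dualmxS.
apply: (IH _ (S + v)%MS).
- exact: submx_trans onesS (addsmxSl S v).
- have : (S < S + v)%MS by rewrite ltmxE addsmxSl addsmx_sub negb_and notSv orbT.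
  rewrite ltmxErank => /andP[_ ltSv].
  by have := rank_leq_col (S + v)%MS; lia.
- have Sv : (S <= dualmx v)%MS by rewrite sub_dualmxC.
  rewrite addsmx_sub (sub_dualmx_adds S S v) (sub_dualmx_adds v S v).
  by apply/andP; split; apply/andP; split.
- move=> c Pc; rewrite (sub_dualmx_adds c S v) (sub_dualmxC c v).
  by apply/andP; split; [apply: PS | apply: vP].
Qed.

Section RowSpace.
Variables (F : fieldType) (k n : nat) (M : 'M[F]_(k, n)).

Let rows := [tuple row i (row_base M) | i < \rank M].

Definition mxvspace : {vspace 'rV[F]_n} := <<rows>>%VS.

Let lin_comb (u : 'rV_(\rank M)) :
  \sum_i u 0 i *: rows`_i = u *m row_base M.
Proof.
rewrite mulmx_sum_row; apply: eq_bigr => i _.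
by rewrite nth_mktuple.
Qed.

Lemma mem_mxvspace y : (y \in mxvspace) = (y <= M)%MS.
Proof.
rewrite -(eq_row_base M); apply/idP/submxP => [/coord_span -> | [u ->]].
  by exists (\row_i coord rows i y); rewrite -lin_comb; apply: eq_bigr => i _; rewrite mxE.
rewrite -lin_comb; apply: memv_suml => i _; apply/memvZ/memv_span.
by rewrite mem_nth // size_tuple.
Qed.

Lemma dim_mxvspace : \dim mxvspace = \rank M.
Proof.
suff /eqP : free rows by rewrite size_tuple.
apply/freeP => a suma0 i.
have /eqP : (\row_j a j) *m row_base M = 0.
  by rewrite -lin_comb -[RHS]suma0; apply: eq_bigr => j _; rewrite mxE.
by rewrite mulmx_free_eq0 ?row_base_free // => /eqP/rowP/(_ i); rewrite !mxE.
Qed.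

End RowSpace.

Lemma dotvE n (y z : bvec n) : dotv y z = (y *m z^T) 0 0.
Proof. by rewrite mxE; apply: eq_bigr => i _; rewrite mxE. Qed.

Lemma dotv_eq0 n (y z : bvec n) : (dotv y z == 0) = (y <= dualmx z)%MS.
Proof.
rewrite sub_dualmx; apply/eqP/eqP => yz0; last by rewrite dotvE yz0 mxE.
by rewrite [LHS]mx11_scalar -dotvE yz0 raddf0.
Qed.

Lemma dotv_diag n (x y c : bvec n) :
  dotv y (c *m diag_mx x) = dotv (y *m diag_mx x) c.
Proof. by rewrite !dotvE trmx_mul tr_diag_mx mulmxA. Qed.

Lemma orth_rowspaceP n k (M : 'M['F_2]_(k, n)) (z : bvec n) :
  (forall y, y \in mxvspace M -> dotv y z = 0) <-> (M <= dualmx z)%MS.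
Proof.
split=> [orthM | Mz y].
  by apply/row_subP => i; rewrite -dotv_eq0 orthM // mem_mxvspace row_sub.
by rewrite mem_mxvspace => yM; apply/eqP; rewrite dotv_eq0 (submx_trans yM).
Qed.

Lemma supported_onE n (y x : bvec n) : supported_on y x <-> y *m diag_mx x = y.
Proof.
split=> [yx | <- i xi0]; last by rewrite mul_mx_diag mxE xi0 mulr0.
apply/rowP => i; rewrite mul_mx_diag !mxE.
by case: (F2_01 (x 0 i)) => xi; rewrite xi ?mulr1 // yx // mulr0.
Qed.

Section SupportRestriction.
Variables (n : nat) (x : bvec n).

(* The rows are the unit vectors e_i, i in the support of x, so that
   c *m supp_mx^T is c restricted to the support of x. *)
Definition supp_mx : 'M['F_2]_(wH x, n) := \matrix_(k, i) (enum_val k == i)%:R.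

Let x_supp i : x 0 i = (i \in [set i | x 0 i != 0])%:R.
Proof. by rewrite inE; case: (F2_01 (x 0 i)) => ->. Qed.

Lemma supp_mx_mulT : supp_mx *m supp_mx^T = 1%:M.
Proof.
apply/matrixP => k k'; rewrite !mxE (bigD1 (enum_val k)) //= !mxE eqxx mul1r.
rewrite big1 ?addr0 => [|i /negbTE ki]; first by rewrite (inj_eq enum_val_inj) eq_sym.
by rewrite !mxE eq_sym ki mul0r.
Qed.

Lemma row_free_supp_mx : row_free supp_mx.
Proof. by apply/row_freeP; exists supp_mx^T; apply: supp_mx_mulT. Qed.

Lemma supp_mxT_mul : supp_mx^T *m supp_mx = diag_mx x.
Proof.
apply/matrixP => i i'; rewrite !mxE.
under eq_bigr do rewrite !mxE -natrM mulnb andbC.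
have [<- | ii'] := eqVneq i i'; last first.
  rewrite mulr0n big1 // => k _.
  by case: (enum_val k =P i') => [-> | //]; rewrite eq_sym (negbTE ii').
under eq_bigr do rewrite andbb.
rewrite mulr1n x_supp -(big_enum_val (fun j => (j == i)%:R)) /=.
case: (boolP (i \in [set i | x 0 i != 0])) => iS.
  by rewrite (bigD1 i) //= eqxx big1 ?addr0 // => j /andP[_ /negbTE->].
by rewrite big1 // => j jS; case: eqP => // ji; rewrite -ji jS in iS.
Qed.

Lemma supp_mx_mul_diag : supp_mx *m diag_mx x = supp_mx.
Proof. by rewrite -supp_mxT_mul mulmxA supp_mx_mulT mul1mx. Qed.

Lemma supp_mx_restrict_self : x *m supp_mx^T = const_mx 1.
Proof.
apply/rowP => k; rewrite !mxE (bigD1 (enum_val k)) //= big1 => [|i /negbTE ki].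
  by rewrite !mxE eqxx mulr1 addr0 x_supp enum_valP.
by rewrite !mxE eq_sym ki mulr0.
Qed.

End SupportRestriction.

Definition CSS_T_witness n (C1 : bvec n -> Prop) (x : bvec n) (Cx : {vspace bvec n}) :=
  [/\ forall y c, y \in Cx -> C1 c -> dotv y c = 0,
      forall y, y \in Cx -> supported_on y x &
      forall z, supported_on z x -> (z \in Cx <-> forall y, y \in Cx -> dotv y z = 0)].

Lemma CSS_T_witness_exists n (C1 : bvec n -> Prop) (x : bvec n) :
  C1 x -> (forall c c', C1 c -> C1 c' -> dotv (c *m diag_mx x) c' = 0) ->
  exists2 Cx, (\dim Cx * 2)%N = wH x & CSS_T_witness C1 x Cx.
Proof.
move=> C1x orthC1; set E := supp_mx x.
have orthE c c' : C1 c -> C1 c' -> (c *m E^T <= dualmx (c' *m E^T))%MS.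
  by move=> C1c C1c'; rewrite -sub_dualmxMr -mulmxA supp_mxT_mul -dotv_eq0 orthC1.
pose P c := exists2 c0, C1 c0 & c = c0 *m E^T.
have [|||S selfS PS] := selfdual_extension (S := const_mx 1) (P := P) (submx_refl _).
- by rewrite -(supp_mx_restrict_self x) orthE.
- by move=> _ _ [c C1c ->] [c' C1c' ->]; apply: orthE.
- by move=> _ [c C1c ->]; rewrite -(supp_mx_restrict_self x) orthE.
have memCx y : (y \in mxvspace (S *m E)) = (y <= S *m E)%MS by rewrite mem_mxvspace.
exists (mxvspace (S *m E)).
  by rewrite dim_mxvspace mxrankMfree ?row_free_supp_mx // mxrank_selfdual.
split=> [y c | y | z /supported_onE zx].
- rewrite memCx => yS C1c; apply/eqP.
  rewrite dotv_eq0 (submx_trans yS) // sub_dualmxMr sub_dualmxC -(eqmxP selfS).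
  by rewrite PS //; exists c.
- rewrite memCx => /submxP[u ->]; apply/supported_onE.
  by rewrite -!mulmxA supp_mx_mul_diag.
- have zE : z = z *m E^T *m E by rewrite -mulmxA supp_mxT_mul zx.
  rewrite orth_rowspaceP memCx {1}zE submxMfree ?row_free_supp_mx //.
  by rewrite sub_dualmxMr sub_dualmxC -(eqmxP selfS).
Qed.

Lemma CSS_T_witness_orth n (C1 : bvec n -> Prop) (x : bvec n) (Cx : {vspace bvec n}) :
  CSS_T_witness C1 x Cx ->
  forall c c', C1 c -> C1 c' -> dotv (c *m diag_mx x) c' = 0.
Proof.
move=> [orthCx suppCx selfCx] c c' C1c C1c'; apply: (orthCx _ _ _ C1c').
have xcx : supported_on (c *m diag_mx x) x.
  by move=> i xi0; rewrite mul_mx_diag mxE xi0 mulr0.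
apply/selfCx => // y Cxy; rewrite dotv_diag.
by have /supported_onE -> := suppCx y Cxy; apply: orthCx.
Qed.

Lemma CSS_T_pairP n (C1 C2 : bvec n -> Prop) : (forall x, C2 x -> C1 x) ->
  CSS_T_pair C1 C2 <->
  (forall x c c', C2 x -> C1 c -> C1 c' -> dotv (c *m diag_mx x) c' = 0).
Proof.
move=> C21; split=> [[_ [_ CSS]] x c c' /CSS[Cx [_ orthCx suppCx selfCx]] | orthC].
  by apply: (@CSS_T_witness_orth _ _ _ Cx); split.
have witness x : C2 x -> exists2 Cx, (\dim Cx * 2)%N = wH x & CSS_T_witness C1 x Cx.
  by move=> C2x; apply: CSS_T_witness_exists => [|c c']; [apply: C21 | apply: orthC].
split=> //; split=> x /witness[Cx dimCx witCx]; first by rewrite -dimCx muln2 odd_double.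
by exists Cx; case: witCx; split; rewrite // -dimCx muln2 doubleK.
Qed.

Lemma bits_inj m i i' : (i < 2 ^ m)%N -> (i' < 2 ^ m)%N ->
  (forall j, (j < m)%N -> odd (i %/ 2 ^ j) = odd (i' %/ 2 ^ j)) -> i = i'.
Proof.
elim: m i i' => [|m IH] i i' ltim lti'm bitsE; first by move: ltim lti'm; rewrite expn0; lia.
rewrite (divn_eq i 2) (divn_eq i' 2) !modn2.
have := bitsE 0%N (ltn0Sn _); rewrite expn0 !divn1 => ->; congr (_ * 2 + _)%N.
apply: IH; rewrite ?ltn_divLR -?expnSr // => j ltjm.
by rewrite -!divnMA -expnS; apply: bitsE.
Qed.

Definition ptfun m (i : 'I_(2 ^ m)) : {ffun 'I_m -> 'F_2} := [ffun j => pt i j].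

Lemma ptfun_bij m : bijective (@ptfun m).
Proof.
apply: inj_card_bij; last by rewrite card_ffun !card_ord.
move=> i i' /ffunP ptE; apply/val_inj/(bits_inj (ltn_ord i) (ltn_ord i')) => j ltjm.
by have := ptE (Ordinal ltjm); rewrite !ffunE /pt; do 2!case: odd.
Qed.

Lemma sumF2 (G : 'F_2 -> 'F_2) : \sum_b G b = G 0 + G 1.
Proof.
rewrite (bigD1 0) //= (bigD1 1) //= big1 ?addr0 // => b /andP[b0 b1].
by case: (F2_01 b) b0 b1 => ->.
Qed.

Lemma sumF2_exp e : \sum_(b : 'F_2) b ^+ e = (0 < e)%:R.
Proof.
rewrite sumF2 expr0n expr1n; case: e => [|e] /=; last by rewrite add0r.
exact: val_inj.
Qed.

Lemma sum_mevalX m (a : 'X_{1..m}) :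
  \sum_(i < 2 ^ m) 'X_[a].@[pt i] = \prod_j (0 < a j)%:R.
Proof.
transitivity (\sum_(f : {ffun 'I_m -> 'F_2}) \prod_j f j ^+ a j).
  rewrite (reindex (@ptfun m)) /=; last exact: onW_bij (ptfun_bij m).
  by apply: eq_bigr => i _; rewrite mevalX; apply: eq_bigr => j _; rewrite ffunE.
rewrite -(bigA_distr_bigA (fun j (b : 'F_2) => b ^+ a j)).
by apply: eq_bigr => j _; rewrite sumF2_exp.
Qed.

Lemma sum_meval_eq0 m (p : {mpoly 'F_2[m]}) : (msize p <= m)%N ->
  \sum_(i < 2 ^ m) p.@[pt i] = 0.
Proof.
move=> szp; rewrite {1}(mpolyE p).
under eq_bigr do rewrite raddf_sum /=.
rewrite exchange_big /= big1_seq // => a /andP[_ supp_a].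
under eq_bigr do rewrite mevalZ.
rewrite -mulr_sumr sum_mevalX.
have [j /eqP aj0] : exists j, a j == 0%N.
  apply/existsP; apply: contraTT (msize_mdeg_lt supp_a) => /existsPn a_pos.
  rewrite -leqNgt (leq_trans szp) // mdegE -[X in (X <= _)%N]card_ord -sum1_card.
  by apply: leq_sum => j _; rewrite lt0n a_pos.
by rewrite (bigD1 j) //= aj0 mul0r mulr0.
Qed.

Lemma msizeM_leq_pred m (p q : {mpoly 'F_2[m]}) :
  (msize (p * q) <= (msize p + msize q).-1)%N.
Proof.
have [->|p0] := eqVneq p 0; first by rewrite mul0r msize0.
have [->|q0] := eqVneq q 0; first by rewrite mulr0 msize0.
by rewrite msizeM.
Qed.

Lemma evalvec_mul_diag m (p q : {mpoly 'F_2[m]}) :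
  evalvec q *m diag_mx (evalvec p) = evalvec (p * q).
Proof. by apply/rowP => i; rewrite mul_mx_diag !mxE mevalM mulrC. Qed.

Lemma dotv_evalvec m (p q : {mpoly 'F_2[m]}) :
  dotv (evalvec p) (evalvec q) = \sum_(i < 2 ^ m) (p * q).@[pt i].
Proof. by apply: eq_bigr => i _; rewrite !mxE mevalM. Qed.

Definition interval_mnm m a b : 'X_{1..m} := [multinom ((a <= j < b)%N : nat) | j < m].

Lemma sum_interval_indicator m a b :
  (\sum_(j < m) ((a <= j) && (j < b) : nat) <= b - a)%N.
Proof.
suff : (\sum_(j < m) ((a <= j) && (j < b) : nat) <= minn m b - a)%N by lia.
elim: m => [|m IH]; first by rewrite big_ord0.
rewrite big_ord_recr /=; move: IH.
by case: (leqP a m); case: (ltnP m b); rewrite /=; lia.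
Qed.

Lemma mdeg_interval_mnm m a b : (mdeg (interval_mnm m a b) <= b - a)%N.
Proof.
rewrite mdegE; under eq_bigr do rewrite mnmE.
exact: sum_interval_indicator.
Qed.

Lemma interval_mnm_cover m a b (j : 'I_m) : (a <= b)%N ->
  (interval_mnm m 0 a + interval_mnm m a b + interval_mnm m b m)%MM j = 1%N.
Proof.
rewrite !mnmDE !mnmE /= => leab; have := ltn_ord j.
by case: (ltnP j a); case: (ltnP j b); lia.
Qed.

Lemma RM_triple_orth m r1 r2 (x c c' : bvec (2 ^ m)) : (r2 + 2 * r1 < m)%N ->
  RM r2 m x -> RM r1 m c -> RM r1 m c' -> dotv (c *m diag_mx x) c' = 0.
Proof.
move=> ltm [p [szp ->]] [q [szq ->]] [q' [szq' ->]].
rewrite evalvec_mul_diag dotv_evalvec sum_meval_eq0 //.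
have := msizeM_leq_pred p q; have := msizeM_leq_pred (p * q) q'; lia.
Qed.

Lemma RM_triple_full m r1 r2 : (m <= r2 + 2 * r1)%N ->
  exists x c c' : bvec (2 ^ m),
    [/\ RM r2 m x, RM r1 m c, RM r1 m c' & dotv (c *m diag_mx x) c' = 1].
Proof.
move=> lem.
have RMX r u : (mdeg u <= r)%N -> RM r m (evalvec 'X_[u]) by exists 'X_[u]; rewrite msizeX.
exists (evalvec 'X_[interval_mnm m 0 r2]), (evalvec 'X_[interval_mnm m r2 (r2 + r1)]).
exists (evalvec 'X_[interval_mnm m (r2 + r1) m]); split.
- by apply/RMX/(leq_trans (mdeg_interval_mnm _ _ _)); rewrite subn0.
- by apply/RMX/(leq_trans (mdeg_interval_mnm _ _ _)); rewrite addKn.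
- by apply/RMX/(leq_trans (mdeg_interval_mnm _ _ _)); lia.
rewrite evalvec_mul_diag dotv_evalvec -!mpolyXD sum_mevalX.
by apply: big1 => j _; rewrite interval_mnm_cover ?leq_addr.
Qed.

Theorem mainTheorem3 (m t r2 : nat) :
  (2 <= m)%N -> (t <= (m.-1)./2)%N -> (r2 <= (m.-1)./2 - t)%N ->
  CSS_T_pair (RM ((m.-1)./2 - t) m) (RM r2 m) <->
  (if odd m then (r2 <= 2 * t)%N else (r2 <= 2 * t + 1)%N).
Proof.
move=> lem tle r2le; set r1 := ((m.-1)./2 - t)%N.
have -> : (if odd m then r2 <= 2 * t else r2 <= 2 * t + 1)%N = (r2 + 2 * r1 < m)%N.
  have oddm : odd m = ~~ odd m.-1 by rewrite -oddS prednK // ltnW.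
  have := odd_double_half m.-1; rewrite -muln2 oddm.
  by case: (odd m.-1) => /= halfE; apply/idP/idP; lia.
rewrite CSS_T_pairP => [|v [p [szp ->]]]; last by exists p; split; first lia.
split=> [orthRM | /RM_triple_orth //].
rewrite ltnNge; apply/negP => /RM_triple_full[x [c [c' [RMx RMc RMc' dot1]]]].
by have := orthRM x c c' RMx RMc RMc'; rewrite dot1 => /eqP; rewrite oner_eq0.
Qed.
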